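(* Consider the damped Newton's method, i.e. SGD with momentum $\mu\in[0,1)$ and preconditioning matrix $\Lambda:=\lambda A^{-1}$ ($\lambda>0$), on linear regression with label noise in the limit $N\to\infty$. Let $g:=2(1-\mu)-\left(\frac{1-\mu}{1+\mu}+\frac1S\right)\lambda$, and assume $g\neq0$ and $gS\neq\lambda D$. Then the model fluctuation is $$\Sigma=\frac{\lambda\sigma^2}{gS-\lambda D}A^{-1}.$$
   Context: Data: $x_i\in\mathbb{R}^D$ i.i.d. $\mathcal N(0,A)$, $A$ symmetric positive definite; $y_i=\mathbf{u}^{\mathrm T}x_i+\epsilon_i$ with $\epsilon_i$ i.i.d., independent of the $x_i$, mean $0$, variance $\sigma^2$; loss $\frac1{2N}\sum_i(\mathbf{w}^{\mathrm T}x_i-y_i)^2$, Hessian $H=A$; batch size $S$. Update: $\mathbf{m}_t=\mu\mathbf{m}_{t-1}+\hat{\mathbf{g}}_t$, $\mathbf{w}_t=\mathbf{w}_{t-1}-\Lambda\mathbf{m}_t$. The fluctuation $\Sigma:=\lim_t\mathbb{E}[(\mathbf{w}_t-\mathbf{u})(\mathbf{w}_t-\mathbf{u})^{\mathrm T}]$ satisfies $(1-\mu)(\Lambda H\Sigma+\Sigma H\Lambda)-\frac{1+\mu^2}{1-\mu^2}\Lambda H\Sigma H\Lambda+\frac{\mu}{1-\mu^2}(\Lambda H\Lambda H\Sigma+\Sigma H\Lambda H\Lambda)=\Lambda C\Lambda$ with $C=\frac1S(A\Sigma A+\mathrm{Tr}[A\Sigma]A+\sigma^2A)$. *)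

From mathcomp Require Import all_boot all_order all_algebra.
Set Implicit Arguments. Unset Strict Implicit. Unset Printing Implicit Defensive.
Import Order.TTheory GRing.Theory Num.Theory.
Local Open Scope ring_scope.

Definition spd (R : realFieldType) (n : nat) (A : 'M[R]_n) : Prop :=
  A^T = A /\ forall v : 'cV[R]_n, v != 0 -> 0 < (v^T *m A *m v) 0 0.

Definition noise_cov (R : realFieldType) (n : nat) (S : nat) (sigma : R)
  (A Sigma : 'M[R]_n) : 'M[R]_n :=
  (S%:R)^-1 *: (A *m Sigma *m A + (\tr (A *m Sigma)) *: A + (sigma ^+ 2) *: A).

(* stationary fluctuation equation for SGD with momentum mu,
   preconditioner Lambda, Hessian H, gradient-noise covariance C *)
Definition fluctuation_eq (R : realFieldType) (n : nat) (mu : R)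
  (Lambda H C Sigma : 'M[R]_n) : Prop :=
  (1 - mu) *: (Lambda *m H *m Sigma + Sigma *m H *m Lambda)
  - ((1 + mu ^+ 2) / (1 - mu ^+ 2)) *: (Lambda *m H *m Sigma *m H *m Lambda)
  + (mu / (1 - mu ^+ 2)) *: (Lambda *m H *m Lambda *m H *m Sigma
                              + Sigma *m H *m Lambda *m H *m Lambda)
  = Lambda *m C *m Lambda.

From mathcomp Require Import all_boot all_order all_algebra.
From mathcomp Require Import ring lra.
Import Order.TTheory GRing.Theory Num.Theory.
Local Open Scope ring_scope.

(* With [Lambda = lambda A^-1] both [Lambda A] and [A Lambda] are [lambda I], so the
   fluctuation equation collapses to a scalar multiple of [Sigma] on the left, while the
   right-hand side is a combination of [Sigma] and [A^-1]. Hence [Sigma] is a multiple of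
   [A^-1] whose coefficient depends on [Tr (A Sigma)]; taking that trace gives a linear
   fixed-point equation for the coefficient. *)

Lemma spd_unitmx {R : realFieldType} {n : nat} {A : 'M[R]_n} : spd A -> A \in unitmx.
Proof.
move=> [sA pA]; rewrite unitmxE unitfE; apply/negP => /det0P [v v0 vA].
have := pA v^T; rewrite trmx_eq0 => /(_ v0).
by rewrite trmxK -mulmxA -[A *m v^T]trmxK trmx_mul trmxK sA vA trmx0 mulmx0 mxE ltxx.
Qed.

Lemma fluctuation_eq_scalar {R : realFieldType} {n : nat} {mu c : R}
    {L H C Sigma : 'M[R]_n} :
  L *m H = c%:M -> H *m L = c%:M -> 1 - mu ^+ 2 != 0 ->
  fluctuation_eq mu L H C Sigma ->
  (c * (2 * (1 - mu) - (1 - mu) / (1 + mu) * c)) *: Sigma = L *m C *m L.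
Proof.
move=> LH HL mu2 <-.
have mu1 : 1 + mu != 0.
  apply: contraNneq mu2 => mu1.
  have -> : 1 - mu ^+ 2 = (1 - mu) * (1 + mu) by ring.
  by rewrite mu1 mulr0.
have LHX X : L *m H *m X = c *: X by rewrite LH mul_scalar_mx.
have XHL X : X *m H *m L = c *: X by rewrite -mulmxA HL mul_mx_scalar.
rewrite !XHL !LHX -!scalemxAl !LHX.
apply/matrixP => i j; rewrite !mxE; field.
by rewrite mu1 mu2.
Qed.

Lemma noise_cov_sandwich {R : realFieldType} {n : nat} (S : nat) (sigma lambda : R)
    {A : 'M[R]_n} (Sigma : 'M[R]_n) :
  A \in unitmx ->
  (lambda *: invmx A) *m noise_cov S sigma A Sigma *m (lambda *: invmx A)
  = (lambda ^+ 2 / S%:R) *: (Sigma + (\tr (A *m Sigma) + sigma ^+ 2) *: invmx A).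
Proof.
move=> uA; rewrite /noise_cov -!(scalemxAl, scalemxAr) !scalerA !mulmxDr !mulmxDl.
rewrite -!(scalemxAl, scalemxAr).
rewrite !mulmxA mulVmx // !mul1mx -mulmxA mulmxV // mulmx1.
by rewrite -addrA -scalerDl expr2.
Qed.

Lemma scaler_solve {K : fieldType} {V : lmodType K} {a b : K} {v w : V} :
  a != b -> a *: v = b *: (v + w) -> v = (b / (a - b)) *: w.
Proof.
rewrite -subr_eq0 => ab E.
have Ev : (a - b) *: v = b *: w by rewrite scalerBl E scalerDr addrAC subrr add0r.
by rewrite -[v](scalerK ab) Ev scalerA mulrC.
Qed.

Lemma trace_fixpoint {R : fieldType} {n : nat} {A Sigma : 'M[R]_n} {b c d : R} :
  A \in unitmx -> d != 0 -> d != c * n%:R ->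
  Sigma = (c / d * (\tr (A *m Sigma) + b)) *: invmx A ->
  Sigma = (c * b / (d - c * n%:R)) *: invmx A.
Proof.
move=> uA d_neq0 dcn E.
have Et : \tr (A *m Sigma) = c / d * (\tr (A *m Sigma) + b) * n%:R.
  by rewrite {1}E -scalemxAr mulmxV // mxtraceZ mxtrace1.
rewrite {1}E; congr (_ *: _).
have dcn' : d - c * n%:R != 0 by rewrite subr_eq0.
apply: (mulIf dcn'); rewrite divfK //.
set t := \tr _ in Et *.
have -> : c / d * (t + b) * (d - c * n%:R) = c * (t + b) - c * (c / d * (t + b) * n%:R).
  by field.
by rewrite -Et; ring.
Qed.

Theorem proposition5 (R : realFieldType) (D S : nat) (A Sigma : 'M[R]_D)
    (mu lambda sigma : R) :
  spd A -> (0 < S)%N -> 0 <= mu -> mu < 1 -> 0 < lambda ->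
  let g := 2 * (1 - mu) - ((1 - mu) / (1 + mu) + (S%:R)^-1) * lambda in
  g != 0 -> g * S%:R != lambda * D%:R ->
  fluctuation_eq mu (lambda *: invmx A) A (noise_cov S sigma A Sigma) Sigma ->
  Sigma = (lambda * sigma ^+ 2 / (g * S%:R - lambda * D%:R)) *: invmx A.
Proof.
move=> /spd_unitmx uA S_gt0 mu_ge0 mu_lt1 lambda_gt0 g g_neq0 gSD.
have S_neq0 : S%:R != 0 :> R by rewrite pnatr_eq0 -lt0n.
have lambda_neq0 : lambda != 0 by rewrite gt_eqF.
have LA : lambda *: invmx A *m A = lambda%:M by rewrite -scalemxAl mulVmx // scalemx1.
have AL : A *m (lambda *: invmx A) = lambda%:M by rewrite -scalemxAr mulmxV // scalemx1.
have mu2 : 1 - mu ^+ 2 != 0 by rewrite gt_eqF //; nra.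
move/(fluctuation_eq_scalar LA AL mu2); rewrite noise_cov_sandwich //.
set a := lambda * _; set b := lambda ^+ 2 / _.
have ab : a - b = lambda * g by rewrite /a /b /g; ring.
have a_neq_b : a != b by rewrite -subr_eq0 ab mulf_neq0.
move/(scaler_solve a_neq_b); rewrite scalerA.
have -> : b / (a - b) = lambda / (g * S%:R).
  by rewrite ab /b; field; rewrite lambda_neq0 g_neq0 S_neq0.
by apply: trace_fixpoint; rewrite ?mulf_neq0.
Qed.
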